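(* Let $(X,d)$ be a reflexive Busemann convex geodesic metric space and let $A,B\subseteq X$ be nonempty, closed and convex, with $B$ bounded. Define $$A_0=\{x\in A : d(x,y')=\operatorname{dist}(A,B)\text{ for some } y'\in B\},\qquad B_0=\{y\in B : d(x',y)=\operatorname{dist}(A,B)\text{ for some } x'\in A\}.$$ Then $A_0$ and $B_0$ are closed, convex, bounded and nonempty.
   Context: $\operatorname{dist}(A,B)=\inf\{d(x,y):x\in A,y\in B\}$. A geodesic space is one in which any two points $x,y$ are joined by a geodesic segment (an isometric image of $[0,d(x,y)]$); a subset is convex if it contains every geodesic segment joining any two of its points. A geodesic space is Busemann convex if for any geodesics $c_1:[0,l_1]\to X$, $c_2:[0,l_2]\to X$ one has $d(c_1(tl_1),c_2(tl_2))\le (1-t)d(c_1(0),c_2(0))+t\,d(c_1(l_1),c_2(l_2))$ for all $t\in[0,1]$. A geodesic space $X$ is reflexive if every decreasing chain $\{C_\alpha\}_{\alpha\in I}$ of nonempty closed convex bounded subsets of $X$ has nonempty intersection. *)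

From Stdlib Require Import Reals.
From Coquelicot Require Import Coquelicot.
Open Scope R_scope.

Section MetricDefs.
Context {X : Type} (d : X -> X -> R).

Definition metric_axioms : Prop :=
  (forall x y, 0 <= d x y) /\
  (forall x y, d x y = 0 <-> x = y) /\
  (forall x y, d x y = d y x) /\
  (forall x y z, d x z <= d x y + d y z).

(* c : [0,l] -> X is a geodesic (isometric embedding of [0,l]);
   c is given as a total function on R, only its values on [0,l] matter *)
Definition geodesic (c : R -> X) (l : R) : Prop :=
  0 <= l /\ forall s t, 0 <= s <= l -> 0 <= t <= l -> d (c s) (c t) = Rabs (s - t).

Definition geodesic_joining (c : R -> X) (x y : X) : Prop :=
  geodesic c (d x y) /\ c 0 = x /\ c (d x y) = y.

Definition geodesic_space : Prop :=
  forall x y, exists c, geodesic_joining c x y.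

Definition mconvex_set (A : X -> Prop) : Prop :=
  forall x y c, A x -> A y -> geodesic_joining c x y ->
    forall t, 0 <= t <= d x y -> A (c t).

Definition busemann_convex : Prop :=
  forall (c1 c2 : R -> X) (l1 l2 : R), geodesic c1 l1 -> geodesic c2 l2 ->
    forall t, 0 <= t <= 1 ->
      d (c1 (t * l1)) (c2 (t * l2)) <= (1 - t) * d (c1 0) (c2 0) + t * d (c1 l1) (c2 l2).

Definition mclosed_set (A : X -> Prop) : Prop :=
  forall x, ~ A x -> exists e, 0 < e /\ forall y, d x y < e -> ~ A y.

Definition mbounded_set (A : X -> Prop) : Prop :=
  exists x0 r, forall x, A x -> d x0 x <= r.

Definition mnonempty_set (A : X -> Prop) : Prop := exists x, A x.

Definition reflexive_space : Prop :=
  forall F : (X -> Prop) -> Prop,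
    (exists C, F C) ->
    (forall C1 C2, F C1 -> F C2 ->
       (forall x, C1 x -> C2 x) \/ (forall x, C2 x -> C1 x)) ->
    (forall C, F C -> mnonempty_set C /\ mclosed_set C /\ mconvex_set C /\ mbounded_set C) ->
    exists x, forall C, F C -> C x.

Definition distAB (A B : X -> Prop) : R :=
  real (Glb_Rbar (fun r => exists x y, A x /\ B y /\ r = d x y)).

Definition proxA0 (A B : X -> Prop) : X -> Prop :=
  fun x => A x /\ exists y', B y' /\ d x y' = distAB A B.

Definition proxB0 (A B : X -> Prop) : X -> Prop :=
  fun y => B y /\ exists x', A x' /\ d x' y = distAB A B.

End MetricDefs.

(* Busemann convexity makes the sets { y : d(y, Q) <= r } and closed balls convex.
   Reflexivity, applied to the nested family (S ∩ ball(p, r))_{r > D}, turns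
   "points of S at distance <= r from p for every r > D" into a point at distance
   <= D; hence those neighbourhoods of closed convex sets are closed.  Applied
   once more to the nested family (B ∩ { y : d(y, A) <= r })_{r > dist(A,B)},
   which needs B bounded, it yields a proximal pair, so A0 and B0 are nonempty.
   Finally A0 = A ∩ { x : d(x, B) <= dist(A,B) }, and symmetrically for B0. *)

From Stdlib Require Import Reals Lra Psatz Classical.
From Stdlib Require Import FunctionalExtensionality PropExtensionality.
From Coquelicot Require Import Coquelicot.
Open Scope R_scope.

Section ProximalSets.
Context {X : Type} (d : X -> X -> R).
Hypothesis Hm : metric_axioms d.

Lemma dist_ge0 x y : 0 <= d x y. Proof. apply (proj1 Hm). Qed.
Lemma dist_xx x : d x x = 0. Proof. now apply (proj1 (proj2 Hm)). Qed.
Lemma dist_sym x y : d x y = d y x. Proof. apply (proj1 (proj2 (proj2 Hm))). Qed.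
Lemma dist_triangle x y z : d x z <= d x y + d y z. Proof. apply (proj2 (proj2 (proj2 Hm))). Qed.

Definition cball (p : X) (r : R) : X -> Prop := fun x => d p x <= r.

Definition closed_nbhd (Q : X -> Prop) (r : R) : X -> Prop :=
  fun x => exists y, Q y /\ d x y <= r.

Definition proximal (P Q : X -> Prop) (D : R) : X -> Prop :=
  fun x => P x /\ exists y, Q y /\ d x y = D.

(* When the infimum is infinite, [real] returns 0, so the bound needs no hypothesis. *)
Lemma distAB_le (A B : X -> Prop) x y : A x -> B y -> distAB d A B <= d x y.
Proof.
  intros Hx Hy. unfold distAB.
  set (E := fun r => exists x y, A x /\ B y /\ r = d x y).
  destruct (Glb_Rbar_correct E) as [Hlb _].
  assert (HE : E (d x y)) by (exists x, y; auto).
  destruct (Glb_Rbar E) as [g| |]; simpl.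
  - exact (Hlb _ HE).
  - apply dist_ge0.
  - apply dist_ge0.
Qed.

Lemma distAB_approx (A B : X -> Prop) : mnonempty_set A -> mnonempty_set B ->
  forall e, 0 < e -> exists x y, A x /\ B y /\ d x y < distAB d A B + e.
Proof.
  intros [a Ha] [b Hb]. unfold distAB.
  set (E := fun r => exists x y, A x /\ B y /\ r = d x y).
  destruct (Glb_Rbar_correct E) as [Hlb Hglb].
  assert (HE : E (d a b)) by (exists a, b; auto).
  intros e He. apply NNPP; intro Hfar.
  destruct (Glb_Rbar E) as [g| |]; simpl in *.
  - assert (Hge : is_lb_Rbar E (g + e)).
    { intros r [x [y [Hx [Hy ->]]]]. simpl. apply Rnot_lt_le. intro Hlt.
      apply Hfar. exists x, y; auto. }
    specialize (Hglb _ Hge). simpl in Hglb. lra.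
  - exact (Hlb _ HE).
  - apply (Hglb 0). intros r [x [y [_ [_ ->]]]]. apply dist_ge0.
Qed.

Lemma mclosed_setI (P Q : X -> Prop) :
  mclosed_set d P -> mclosed_set d Q -> mclosed_set d (fun x => P x /\ Q x).
Proof.
  intros HP HQ x Hx. destruct (classic (P x)) as [Px|nPx].
  - destruct (HQ x) as [e [He HQe]]; [tauto|].
    exists e. split; [lra|]. intros y Hy [_ Qy]. exact (HQe y Hy Qy).
  - destruct (HP x nPx) as [e [He HPe]].
    exists e. split; [lra|]. intros y Hy [Py _]. exact (HPe y Hy Py).
Qed.

Lemma mconvex_setI (P Q : X -> Prop) :
  mconvex_set d P -> mconvex_set d Q -> mconvex_set d (fun x => P x /\ Q x).
Proof.
  intros HP HQ x y c [Px Qx] [Py Qy] Hc t Ht.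
  split; [exact (HP x y c Px Py Hc t Ht) | exact (HQ x y c Qx Qy Hc t Ht)].
Qed.

Lemma mclosed_cball p r : mclosed_set d (cball p r).
Proof.
  intros x Hx. unfold cball in *.
  exists (d p x - r). split; [lra|]. intros y Hy Hpy.
  pose proof (dist_triangle p y x). rewrite (dist_sym y x) in H. lra.
Qed.

Lemma const_geodesic p : geodesic_joining d (fun _ => p) p p.
Proof.
  unfold geodesic_joining, geodesic. rewrite dist_xx.
  split; [split; [lra|] | split; reflexivity].
  intros s t Hs Ht. replace (s - t) with 0 by lra. now rewrite Rabs_R0.
Qed.

Section Busemann.
Hypothesis Hbus : busemann_convex d.

(* The companion of [c1 s] is the point of [c2] at the same proportion of its length. *)
Lemma geodesic_companion_le c1 c2 x1 x2 y1 y2 s r :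
  geodesic_joining d c1 x1 x2 -> geodesic_joining d c2 y1 y2 -> 0 <= s <= d x1 x2 ->
  d x1 y1 <= r -> d x2 y2 <= r ->
  exists s', 0 <= s' <= d y1 y2 /\ d (c1 s) (c2 s') <= r.
Proof.
  intros [G1 [c1_0 c1_l]] [G2 [c2_0 c2_l]] Hs H1 H2.
  pose proof (dist_ge0 y1 y2) as Hl2.
  destruct (Req_dec (d x1 x2) 0) as [Hz|Hnz].
  - exists 0. split; [lra|]. replace s with 0 by lra. now rewrite c1_0, c2_0.
  - set (l1 := d x1 x2) in *. set (l2 := d y1 y2) in *.
    assert (Hl1 : 0 < l1) by (pose proof (dist_ge0 x1 x2); fold l1 in H; lra).
    set (t := s / l1).
    assert (Hts : t * l1 = s) by (unfold t; field; lra).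
    assert (Ht : 0 <= t <= 1) by (split; nra).
    exists (t * l2). split; [split; nra|].
    pose proof (Hbus c1 c2 l1 l2 G1 G2 t Ht) as HB.
    rewrite Hts, c1_0, c2_0, c1_l, c2_l in HB. nra.
Qed.

Lemma mconvex_cball p r : mconvex_set d (cball p r).
Proof.
  intros x y c Hx Hy Hc s Hs. unfold cball in *.
  rewrite dist_sym in Hx, Hy.
  destruct (geodesic_companion_le c (fun _ => p) x y p p s r Hc (const_geodesic p) Hs Hx Hy)
    as [s' [_ Hd]].
  now rewrite dist_sym.
Qed.

Hypothesis Hgeo : geodesic_space d.

Lemma mconvex_closed_nbhd Q r : mconvex_set d Q -> mconvex_set d (closed_nbhd Q r).
Proof.
  intros HQ x1 x2 c [y1 [Qy1 H1]] [y2 [Qy2 H2]] Hc s Hs.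
  destruct (Hgeo y1 y2) as [c' Hc'].
  destruct (geodesic_companion_le c c' x1 x2 y1 y2 s r Hc Hc' Hs H1 H2) as [s' [Hs' Hd]].
  exists (c' s'). split; [exact (HQ y1 y2 c' Qy1 Qy2 Hc' s' Hs') | exact Hd].
Qed.

End Busemann.

Section Reflexive.
Hypothesis Hrefl : reflexive_space d.

Lemma reflexive_nested (C : R -> X -> Prop) D :
  (forall r1 r2 x, r1 <= r2 -> C r1 x -> C r2 x) ->
  (forall r, D < r -> mnonempty_set (C r) /\ mclosed_set d (C r) /\
                      mconvex_set d (C r) /\ mbounded_set d (C r)) ->
  exists x, forall r, D < r -> C r x.
Proof.
  intros Hmono Hprops.
  destruct (Hrefl (fun S => exists r, D < r /\ S = C r)) as [x Hx].
  - exists (C (D + 1)), (D + 1). split; [lra | reflexivity].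
  - intros S1 S2 [r1 [_ ->]] [r2 [_ ->]]. destruct (Rle_dec r1 r2).
    + left. intros x. apply Hmono. lra.
    + right. intros x. apply Hmono. lra.
  - intros S [r [Hr ->]]. exact (Hprops r Hr).
  - exists x. intros r Hr. apply Hx. exists r. auto.
Qed.

Hypothesis Hbus : busemann_convex d.

Lemma exists_nearest (S : X -> Prop) p D :
  mclosed_set d S -> mconvex_set d S ->
  (forall r, D < r -> exists y, S y /\ d p y <= r) -> exists y, S y /\ d p y <= D.
Proof.
  intros HSc HSv Happ.
  destruct (reflexive_nested (fun r y => S y /\ cball p r y) D) as [y Hy].
  - intros r1 r2 y Hr [Sy Hpy]. unfold cball in *. split; [exact Sy | lra].
  - intros r Hr. split; [|split; [|split]].
    + exact (Happ r Hr).
    + exact (mclosed_setI S _ HSc (mclosed_cball p r)).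
    + exact (mconvex_setI S _ HSv (mconvex_cball Hbus p r)).
    + exists p, r. intros x [_ Hx]. exact Hx.
  - exists y. split; [exact (proj1 (Hy (D + 1) ltac:(lra)))|].
    apply Rnot_lt_le. intro Hlt.
    destruct (Hy ((D + d p y) / 2) ltac:(lra)) as [_ Hpy]. unfold cball in Hpy. lra.
Qed.

Lemma mclosed_closed_nbhd Q r :
  mclosed_set d Q -> mconvex_set d Q -> mclosed_set d (closed_nbhd Q r).
Proof.
  intros HQc HQv x Hx.
  destruct (classic (exists e, 0 < e /\ forall y, Q y -> r + e <= d x y)) as [[e [He Hfar]]|Hnear].
  - exists e. split; [exact He|]. intros x' Hxx' [y [Qy Hy]].
    pose proof (Hfar y Qy). pose proof (dist_triangle x x' y). lra.
  - exfalso. apply Hx. apply (exists_nearest Q x r HQc HQv).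
    intros r' Hr'. apply NNPP. intro Hno. apply Hnear.
    exists (r' - r). split; [lra|]. intros y Qy. apply Rnot_lt_le. intro Hlt.
    apply Hno. exists y. split; [exact Qy | lra].
Qed.

Hypothesis Hgeo : geodesic_space d.

Lemma exists_proximal_pair (A B : X -> Prop) :
  mnonempty_set A -> mclosed_set d A -> mconvex_set d A ->
  mnonempty_set B -> mclosed_set d B -> mconvex_set d B -> mbounded_set d B ->
  exists x y, A x /\ B y /\ d x y = distAB d A B.
Proof.
  intros HAn HAc HAv HBn HBc HBv [b0 [rb Hb]].
  set (D := distAB d A B).
  destruct (reflexive_nested (fun r y => B y /\ closed_nbhd A r y) D) as [y Hy].
  - intros r1 r2 y Hr [By [x [Ax Hxy]]]. split; [exact By|]. exists x. split; [exact Ax | lra].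
  - intros r Hr. split; [|split; [|split]].
    + destruct (distAB_approx A B HAn HBn (r - D)) as [x [y [Ax [By Hxy]]]]; [lra|].
      exists y. split; [exact By|]. exists x. rewrite dist_sym. split; [exact Ax | fold D in Hxy; lra].
    + exact (mclosed_setI B _ HBc (mclosed_closed_nbhd A r HAc HAv)).
    + exact (mconvex_setI B _ HBv (mconvex_closed_nbhd Hbus Hgeo A r HAv)).
    + exists b0, rb. intros y [By _]. exact (Hb y By).
  - destruct (exists_nearest A y D HAc HAv) as [x [Ax Hyx]].
    + intros r Hr. exact (proj2 (Hy r Hr)).
    + exists x, y. pose proof (proj1 (Hy (D + 1) ltac:(lra))) as By.
      pose proof (distAB_le A B x y Ax By) as Hlb. rewrite dist_sym in Hyx.
      repeat split; [exact Ax | exact By | fold D in Hlb |- *; lra].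
Qed.

End Reflexive.

Lemma proximal_eq_closed_nbhd (P Q : X -> Prop) D :
  (forall x y, P x -> Q y -> D <= d x y) ->
  proximal P Q D = fun x => P x /\ closed_nbhd Q D x.
Proof.
  intros Hlb. apply functional_extensionality. intros x.
  apply propositional_extensionality. unfold proximal, closed_nbhd. split.
  - intros [Px [y [Qy Hxy]]]. split; [exact Px|]. exists y. split; [exact Qy | lra].
  - intros [Px [y [Qy Hxy]]]. split; [exact Px|]. exists y. split; [exact Qy|].
    pose proof (Hlb x y Px Qy). lra.
Qed.

Lemma proxB0_proximal (A B : X -> Prop) : proxB0 d A B = proximal B A (distAB d A B).
Proof.
  apply functional_extensionality. intros y.
  apply propositional_extensionality. unfold proxB0, proximal.
  split; intros [By [x [Ax Hxy]]]; split; try exact By; exists x; split; try exact Ax;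
    rewrite dist_sym; exact Hxy.
Qed.

Lemma mbounded_proximal (P Q : X -> Prop) D :
  mbounded_set d Q -> mbounded_set d (proximal P Q D).
Proof.
  intros [q [r Hq]]. exists q, (r + D). intros x [_ [y [Qy Hxy]]].
  pose proof (Hq y Qy). pose proof (dist_triangle q y x). rewrite (dist_sym y x) in *. lra.
Qed.

End ProximalSets.

Theorem mainTheorem1 (X : Type) (d : X -> X -> R) (A B : X -> Prop) :
  metric_axioms d -> geodesic_space d -> busemann_convex d -> reflexive_space d ->
  mnonempty_set A -> mclosed_set d A -> mconvex_set d A ->
  mnonempty_set B -> mclosed_set d B -> mconvex_set d B -> mbounded_set d B ->
  (mclosed_set d (proxA0 d A B) /\ mconvex_set d (proxA0 d A B) /\
   mbounded_set d (proxA0 d A B) /\ mnonempty_set (proxA0 d A B)) /\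
  (mclosed_set d (proxB0 d A B) /\ mconvex_set d (proxB0 d A B) /\
   mbounded_set d (proxB0 d A B) /\ mnonempty_set (proxB0 d A B)).
Proof.
  intros Hm Hgeo Hbus Hrefl HAn HAc HAv HBn HBc HBv HBb.
  set (D := distAB d A B).
  assert (HlbA : forall x y, A x -> B y -> D <= d x y) by exact (distAB_le d Hm A B).
  assert (HlbB : forall y x, B y -> A x -> D <= d y x).
  { intros y x By Ax. rewrite (dist_sym d Hm). auto. }
  destruct (exists_proximal_pair d Hm Hrefl Hbus Hgeo A B HAn HAc HAv HBn HBc HBv HBb)
    as [x0 [y0 [Ax0 [By0 Hd0]]]].
  change (proxA0 d A B) with (proximal d A B D).
  rewrite (proxB0_proximal d Hm A B). fold D.
  split; [split; [|split; [|split]] | split; [|split; [|split]]].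
  - rewrite (proximal_eq_closed_nbhd d A B D HlbA).
    exact (mclosed_setI d A _ HAc (mclosed_closed_nbhd d Hm Hrefl Hbus B D HBc HBv)).
  - rewrite (proximal_eq_closed_nbhd d A B D HlbA).
    exact (mconvex_setI d A _ HAv (mconvex_closed_nbhd d Hm Hbus Hgeo B D HBv)).
  - exact (mbounded_proximal d Hm A B D HBb).
  - exists x0. split; [exact Ax0|]. exists y0. split; [exact By0 | exact Hd0].
  - rewrite (proximal_eq_closed_nbhd d B A D HlbB).
    exact (mclosed_setI d B _ HBc (mclosed_closed_nbhd d Hm Hrefl Hbus A D HAc HAv)).
  - rewrite (proximal_eq_closed_nbhd d B A D HlbB).
    exact (mconvex_setI d B _ HBv (mconvex_closed_nbhd d Hm Hbus Hgeo A D HAv)).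
  - destruct HBb as [b [r Hb]]. exists b, r. intros y [By _]. exact (Hb y By).
  - exists y0. split; [exact By0|]. exists x0. split; [exact Ax0|]. rewrite (dist_sym d Hm). exact Hd0.
Qed.
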